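(* Let $(\Omega,\mathcal F)$ be a measurable space and $\mathcal P$ a σ-convex family of probability measures on $\mathcal F$. The following are equivalent: (1) $\mathcal P$ has the class (S) property and, for a $\mathcal P$-q.s. disjointly supported alternative $\mathcal R$ of $\mathcal P$ with supports $\{S_Q\}_{Q\in\mathcal R}$, every $P\in\mathcal P$ satisfies $P\big(\bigcup_{Q\in\mathcal R(P)}S_Q\big)=1$; (2) $\mathcal P$ is pre-Hahn-localizable.
   Context: A set is $\mathcal P$-polar if contained in some $N\in\mathcal F$ with $P(N)=0$ for all $P\in\mathcal P$. A measure $\mu$ on $\mathcal F$ is supported with support $S\in\mathcal F$ if $\mu(\Omega\setminus S)=0$ and, whenever $N\in\mathcal F$ with $\mu(N\cap S)=0$, $N\cap S$ is $\mathcal P$-polar. $\mathcal P$ has the class (S) property if there is a family $\mathcal R$ of supported probability measures on $\mathcal F$ (a supported alternative) with the same null sets as $\mathcal P$; it is $\mathcal P$-q.s. disjointly supported if $S_Q\cap S_R$ is $\mathcal P$-polar for $Q\neq R$ in $\mathcal R$. $\mathcal R(P)=\{Q\in\mathcal R:P(S_Q)>0\}$. $\mathcal A\lll\mathcal B$ means every $A\in\mathcal A$ is absolutely continuous w.r.t. some $B\in\mathcal B$; $\mathrm{sconv}$ denotes countable convex combinations; σ-convex means closed under countable convex combinations. $\mathcal P$ is pre-Hahn-localizable if there are a family $\mathcal Q$ of probability measures on $\mathcal F$ and sets $S_Q\in\mathcal F$ with $Q(S_R)=\delta_{QR}$ for $Q,R\in\mathcal Q$ and $\mathcal Q\lll\mathcal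 P\lll\mathrm{sconv}(\mathcal Q)$. *)

From HB Require Import structures.
From mathcomp Require Import all_boot all_order all_algebra.
From mathcomp Require Import all_classical all_reals all_analysis.
Set Implicit Arguments. Unset Strict Implicit. Unset Printing Implicit Defensive.
Import Order.TTheory GRing.Theory Num.Theory.
Local Open Scope classical_set_scope.
Local Open Scope ring_scope.

Section Defs.
Context {d : measure_display} {T : measurableType d} {R : realType}.
Local Notation prob := (probability T R).

Definition polar (Ps : set prob) (A : set T) : Prop :=
  exists N, [/\ measurable N, A `<=` N & forall P, Ps P -> P N = 0%E].

Definition supported_with (Ps : set prob) (mu : prob) (S : set T) : Prop :=
  [/\ measurable S, mu (~` S) = 0%E &
      forall N, measurable N -> mu (N `&` S) = 0%E -> polar Ps (N `&` S)].

Definition same_null_sets (Ps Rs : set prob) : Prop :=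
  forall N, measurable N ->
    ((forall P, Ps P -> P N = 0%E) <-> (forall Q, Rs Q -> Q N = 0%E)).

Definition supported_alternative (Ps Rs : set prob) (S : prob -> set T) : Prop :=
  (forall Q, Rs Q -> supported_with Ps Q (S Q)) /\ same_null_sets Ps Rs.

Definition class_S (Ps : set prob) : Prop :=
  exists Rs S, supported_alternative Ps Rs S.

Definition qs_disjointly_supported (Ps Rs : set prob) (S : prob -> set T) : Prop :=
  forall Q Q', Rs Q -> Rs Q' -> Q <> Q' -> polar Ps (S Q `&` S Q').

Definition RP (Rs : set prob) (S : prob -> set T) (P : prob) : set prob :=
  [set Q | Rs Q /\ (0 < P (S Q))%E].

(* mu (a set function on T) is a countable convex combination of elements
   of Qs, i.e. mu belongs to sconv(Qs) (equality checked on F). *)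
Definition in_sconv (Qs : set prob) (mu : set T -> \bar R) : Prop :=
  exists (q : nat -> prob) (l : nat -> R),
    [/\ forall n, Qs (q n), forall n, 0 <= l n,
        (\sum_(0 <= n <oo) (l n)%:E)%E = 1%E &
        forall A, measurable A -> mu A = (\sum_(0 <= n <oo) (l n)%:E * q n A)%E].

Definition sigma_convex (Ps : set prob) : Prop :=
  forall mu, in_sconv Ps mu ->
    exists P, Ps P /\ forall A, measurable A -> P A = mu A.

Definition abs_cont (mu nu : set T -> \bar R) : Prop :=
  forall A, measurable A -> nu A = 0%E -> mu A = 0%E.

Definition lll (As Bs : set prob) : Prop :=
  forall A, As A -> exists B, Bs B /\ abs_cont A B.

Definition lll_sconv (Ps Qs : set prob) : Prop :=
  forall P, Ps P -> exists mu, in_sconv Qs mu /\ abs_cont P mu.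

Definition pre_Hahn_localizable (Ps : set prob) : Prop :=
  exists (Qs : set prob) (S : prob -> set T),
    [/\ forall Q, Qs Q -> measurable (S Q),
        forall Q Q', Qs Q -> Qs Q' ->
          Q (S Q') = (if pselect (Q = Q') then 1 else 0)%E,
        lll Qs Ps & lll_sconv Ps Qs].

End Defs.

From mathcomp Require Import all_boot all_order all_algebra.
From mathcomp Require Import all_classical all_reals all_analysis.
Set Implicit Arguments. Unset Strict Implicit. Unset Printing Implicit Defensive.
Import Order.TTheory GRing.Theory Num.Theory.
Local Open Scope classical_set_scope.
Local Open Scope ring_scope.

(* Everything rests on exhaustion: in a family of measurable sets closed under
   countable unions, a member of maximal measure absorbs every other member up
   to a null set.

   (2) => (1): the localizing family itself, with the sets [S Q], is a q.s.
   disjointly supported alternative, and a [P] dominated by a countable convex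
   combination of the [Q n] is carried by those [S (Q n)] that it charges.

   (1) => (2): the alternative itself is localizing. Its members [Q] charged
   by a given [P] have supports that overlap only in [P]-null sets, so there
   are countably many of them and [P] is dominated by their geometric mixture.
   Finally, sigma-convexity makes the sets on which [Q] is dominated by some
   member of [Ps] closed under countable unions; a maximal one exhausts the
   support of [Q], which yields a single member of [Ps] dominating [Q]. *)

Section exhaustion.
Context d (T : measurableType d) (R : realType).
Variable mu : {finite_measure set T -> \bar R}.
Local Open Scope ereal_scope.

Lemma measure_exhaustion (F : set (set T)) :
  (forall A, F A -> measurable A) -> F !=set0 ->
  (forall A_ : (set T)^nat, (forall n, F (A_ n)) -> F (\bigcup_n A_ n)) ->
  exists2 B, F B & forall A, F A -> mu (A `\` B) = 0.
Proof.
move=> Fm [A0 FA0] Fcup.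
pose s := ereal_sup [set mu A | A in F].
have s_ub A : F A -> mu A <= s by move=> FA; apply: ereal_sup_ubound; exists A.
have s_fin : s \is a fin_num.
  rewrite ge0_fin_numE; last exact: le_trans (measure_ge0 mu A0) (s_ub _ FA0).
  apply: le_lt_trans (_ : mu setT < +oo); last by rewrite ltey_eq fin_num_measure.
  apply: ge_ereal_sup => _ [A FA <-]; apply: le_measure; rewrite ?inE //; exact: Fm.
have /choice [A_ FA_] : forall n : nat,
    exists A, F A /\ s - (n.+1%:R^-1)%:E < mu A.
  move=> n.
  have e_gt0 : (0 < n.+1%:R^-1 :> R)%R by rewrite invr_gt0.
  have [_ [A FA <-] ?] := ub_ereal_sup_adherent e_gt0 s_fin.
  by exists A.
pose B := \bigcup_n A_ n.
have FB : F B by apply: Fcup => n; case: (FA_ n).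
have s_le_B : s <= mu B.
  apply/lee_addgt0Pr => e e0.
  have [n _ /(_ n (leqnn n)) ne] := near_infty_natSinv_lt (PosNum e0).
  have [FAn] := FA_ n; rewrite lteBlDr // => /ltW/le_trans; apply.
  apply: leeD; last by rewrite lee_fin ltW.
  by apply: le_measure; rewrite ?inE; [exact: Fm|exact: Fm|exact: bigcup_sup].
exists B => // A FA.
have FAB : F (A `|` B).
  suff -> : A `|` B = \bigcup_n (if n is 0 then A else B) by apply: Fcup => -[|].
  apply/seteqP; split => [x [Ax|Bx]|x [[|n] _ ?]]; by [exists 0%N|exists 1%N|left|right].
have := le_trans (s_ub _ FAB) s_le_B.
have mA := Fm _ FA; have mB := Fm _ FB.
have -> : A `|` B = B `|` (A `\` B) by rewrite setUDr setDv setD0 setUC.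
rewrite measureU ?setDIK //; last exact: measurableD.
rewrite -[leRHS]adde0 leeD2lE ?fin_num_measure // => le0.
by apply/eqP; rewrite -measure_le0.
Qed.

(* [E] carries the part of [mu] that is singular with respect to [nu]. *)
Lemma exists_singular_null_set (nu : {measure set T -> \bar R}) :
  exists2 E, measurable E /\ nu E = 0 &
    forall A, measurable A -> nu A = 0 -> mu (A `\` E) = 0.
Proof.
pose F := [set E | measurable E /\ nu E = 0].
have Fcup (E_ : (set T)^nat) : (forall n, F (E_ n)) -> F (\bigcup_n E_ n).
  move=> FE; have mE : measurable (\bigcup_n E_ n).
    by apply: bigcup_measurable => n _; case: (FE n).
  split => //; apply/negligibleP => //; apply: negligible_bigcup => n.
  by case: (FE n) => ? ?; exact/negligibleP.
have [|E FE maxE] := @measure_exhaustion F (fun _ FE => proj1 FE) _ Fcup.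
  by exists set0; split; [exact: measurable0|exact: measure0].
by exists E => // A mA nuA; exact: maxE.
Qed.

Lemma charged_family_countable (I : Type) (D : set I) (S : I -> set T) :
  D !=set0 -> (forall i, D i -> measurable (S i)) ->
  (forall i j, D i -> D j -> i <> j -> mu.-negligible (S i `&` S j)) ->
  (forall i, D i -> 0 < mu (S i)) ->
  exists q : nat -> I, D = range q.
Proof.
move=> [i0 Di0] mS disj charged.
pose F := [set B | exists q : nat -> I, (forall n, D (q n)) /\ B = \bigcup_n S (q n)].
have Fm B : F B -> measurable B.
  by move=> [q [Dq ->]]; apply: bigcup_measurable => n _; exact/mS/Dq.
have Fcup (B_ : (set T)^nat) : (forall n, F (B_ n)) -> F (\bigcup_n B_ n).
  move=> /choice[q_ Fq_].
  pose q m := if unpickle m is Some (a, b) then q_ a b else q_ 0%N 0%N.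
  exists q; split => [m|]; first by rewrite /q; case: unpickle => [[a b]|]; exact: (Fq_ _).1.
  apply/seteqP; split => x.
    move=> [a _]; case: (Fq_ a) => _ -> [b _ Sx].
    by exists (pickle (a, b)) => //; rewrite /q pickleK.
  move=> [m _]; rewrite /q; case: unpickle => [[a b]|] Sx.
    by exists a => //; case: (Fq_ a) => _ ->; exists b.
  by exists 0%N => //; case: (Fq_ 0%N) => _ ->; exists 0%N.
have FS j : D j -> F (S j).
  by exists (fun=> j); split => //; rewrite bigcup_const //; exists 0%N.
have [_ [q [Dq ->]] maxB] := @measure_exhaustion F Fm (ex_intro _ _ (FS _ Di0)) Fcup.
exists q; apply/seteqP; split => [i Di|_ [n _ <-]]; last exact: Dq.
apply: contrapT => qi; have := charged i Di.
suff -> : mu (S i) = 0 by rewrite ltxx.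
have mSi := mS i Di; apply/negligibleP => //.
apply: (@negligibleS _ _ _ _ ((S i `\` \bigcup_n S (q n)) `|` \bigcup_n (S i `&` S (q n)))).
  by move=> x Sx; have [[n _ Sqx]|?] := pselect ((\bigcup_n S (q n)) x); [right; exists n|left].
have mB : measurable (\bigcup_n S (q n)) by apply: Fm; exists q.
apply: negligibleU; first by apply/negligibleP; [exact: measurableD|exact/maxB/FS].
by apply: negligible_bigcup => n; apply: disj => // qni; apply: qi; exists n.
Qed.

End exhaustion.

Section geometric_weight.
Context {R : realType}.
Local Open Scope ereal_scope.

Definition geometric_weight (n : nat) : R := (2 ^ n.+1)%:R^-1.

Lemma geometric_weight_gt0 n : (0 < geometric_weight n)%R.
Proof. by rewrite invr_gt0 ltr0n expn_gt0. Qed.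

Lemma eseries_geometric_weight : \sum_(0 <= n <oo) (geometric_weight n)%:E = 1.
Proof.
have := @cvg_geometric_eseries_half R 1 0; rewrite expr0 divr1.
rewrite (_ : (fun k => _) = fun n => (geometric_weight n)%:E); first exact: cvg_lim.
by apply/funext => n; rewrite div1r addn1.
Qed.

Lemma nneseries_eq0 (f : nat -> \bar R) n :
  (forall k, 0 <= f k) -> \sum_(0 <= k <oo) f k = 0 -> f n = 0.
Proof.
move=> f0; rewrite (@nneseriesD1 _ _ n xpredT) // => /eqP.
by rewrite padde_eq0 ?nneseries_ge0 // => /andP[/eqP].
Qed.

End geometric_weight.

Section mixture.
Context {d : measure_display} {T : measurableType d} {R : realType}.
Local Notation prob := (probability T R).
Local Open Scope ereal_scope.

Lemma weighted_eseries_eq0 (q : nat -> prob) (l : nat -> R) A :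
  (forall n, (0 <= l n)%R) -> (forall n, (0 < l n)%R -> q n A = 0) ->
  \sum_(0 <= n <oo) (l n)%:E * q n A = 0.
Proof.
move=> l0 ql; apply: eseries0 => n _ _.
have [->|ln0] := eqVneq (l n) 0%R; first by rewrite mul0e.
by rewrite ql ?mule0 // lt_neqAle eq_sym ln0 l0.
Qed.

Definition mixture (q : nat -> prob) : set T -> \bar R :=
  fun A => \sum_(0 <= n <oo) (geometric_weight n)%:E * q n A.

Lemma mixture_in_sconv (Qs : set prob) (q : nat -> prob) :
  (forall n, Qs (q n)) -> in_sconv Qs (mixture q).
Proof.
move=> Qsq; exists q, geometric_weight; split => //.
- by move=> n; exact/ltW/geometric_weight_gt0.
- exact: eseries_geometric_weight.
Qed.

Lemma mixture_eq0 (q : nat -> prob) A n : mixture q A = 0 -> q n A = 0.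
Proof.
move=> mix0; have /eqP : (geometric_weight n)%:E * q n A = 0.
  apply: nneseries_eq0 mix0 => k.
  by rewrite mule_ge0 // lee_fin ltW ?geometric_weight_gt0.
by rewrite mule_eq0 eqe gt_eqF ?geometric_weight_gt0 //= => /eqP.
Qed.

Lemma sigma_convex_dominates (Ps : set prob) (q : nat -> prob) :
  sigma_convex Ps -> (forall n, Ps (q n)) ->
  exists2 P, Ps P & forall n, abs_cont (q n) P.
Proof.
move=> sc Psq; have [P [PsP PE]] := sc _ (mixture_in_sconv Psq).
by exists P => // n A mA PA; apply: mixture_eq0; rewrite -PE.
Qed.

End mixture.

Section null_sets.
Context {d : measure_display} {T : measurableType d} {R : realType}.
Local Notation prob := (probability T R).
Local Open Scope ereal_scope.

Lemma probability_setC_eq0 (P : prob) A :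
  measurable A -> P (~` A) = 0 <-> P A = 1.
Proof.
move=> mA; rewrite probability_setC //; split => [/eqP|->]; last exact: subee.
by rewrite sube_eq ?fin_num_measure ?add0e // => /eqP.
Qed.

Lemma polar_negligible (Ps : set prob) A P : polar Ps A -> Ps P -> P.-negligible A.
Proof. by move=> [N [mN AN PN]] PsP; exists N; split => //; exact: PN. Qed.

Lemma same_null_sets_negligible (Ps Rs : set prob) A Q :
  same_null_sets Ps Rs -> polar Ps A -> Rs Q -> Q.-negligible A.
Proof.
by move=> same [N [mN AN PN]] RsQ; exists N; split => //; exact: (same N mN).1.
Qed.

End null_sets.

Section pre_Hahn_localizable_class_S.
Context {d : measure_display} {T : measurableType d} {R : realType}.
Local Notation prob := (probability T R).
Local Open Scope ereal_scope.

Variables (Ps Qs : set prob) (S : prob -> set T).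
Hypothesis mS : forall Q, Qs Q -> measurable (S Q).
Hypothesis QS : forall Q Q', Qs Q -> Qs Q' ->
  Q (S Q') = (if pselect (Q = Q') then 1 else 0).
Hypothesis QsPs : lll Qs Ps.
Hypothesis PsQs : lll_sconv Ps Qs.

Let QSC Q : Qs Q -> Q (~` S Q) = 0.
Proof. by move=> QsQ; apply/probability_setC_eq0; [exact: mS|rewrite QS //; case: pselect]. Qed.

Let QS0 Q Q' : Qs Q -> Qs Q' -> Q <> Q' -> Q (S Q') = 0.
Proof. by move=> QsQ QsQ' neq; rewrite QS //; case: pselect. Qed.

Lemma pre_Hahn_null P A : Ps P -> measurable A ->
  (forall Q, Qs Q -> Q A = 0) -> P A = 0.
Proof.
move=> PsP mA QA; have [mu [[q [l [Qsq l0 _ muE]]] Pmu]] := PsQs PsP.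
by apply: Pmu => //; rewrite muE //; apply: weighted_eseries_eq0 => // n _; exact: QA.
Qed.

Lemma pre_Hahn_polar A : measurable A -> (forall Q, Qs Q -> Q A = 0) -> polar Ps A.
Proof. by move=> mA QA; exists A; split => // P PsP; exact: pre_Hahn_null. Qed.

Lemma pre_Hahn_supported_alternative : supported_alternative Ps Qs S.
Proof.
split=> [Q QsQ|N mN].
  split=> [||N mN QN]; [exact: mS|exact: QSC|].
  have mNS : measurable (N `&` S Q) by apply: measurableI => //; exact: mS.
  apply: pre_Hahn_polar => // Q' QsQ'; have [->//|neq] := pselect (Q' = Q).
  exact: (subset_measure0 mNS (mS QsQ) (@subIsetr _ _ _) (QS0 QsQ' QsQ neq)).
split=> [PN Q QsQ|QN P PsP]; last exact: pre_Hahn_null.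
by have [P [PsP QP]] := QsPs QsQ; apply: QP (PN P PsP).
Qed.

Lemma pre_Hahn_disjointly_supported : qs_disjointly_supported Ps Qs S.
Proof.
move=> Q Q' QsQ QsQ' neq; have mQQ' : measurable (S Q `&` S Q') by apply: measurableI; exact: mS.
apply: pre_Hahn_polar => // Q'' QsQ''; have [->|neq'] := pselect (Q'' = Q).
  exact: subset_measure0 mQQ' (mS QsQ') (@subIsetr _ _ _) (QS0 QsQ QsQ' neq).
exact: subset_measure0 mQQ' (mS QsQ) (@subIsetl _ _ _) (QS0 QsQ'' QsQ neq').
Qed.

Lemma pre_Hahn_cover P : Ps P ->
  measurable (\bigcup_(Q in RP Qs S P) S Q) /\
  P (\bigcup_(Q in RP Qs S P) S Q) = 1.
Proof.
move=> PsP; have [mu [[q [l [Qsq l0 _ muE]]] Pmu]] := PsQs PsP.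
have Pnull A : measurable A -> (forall n, (0 < l n)%R -> q n A = 0) -> P A = 0.
  by move=> mA qA; apply: Pmu => //; rewrite muE //; exact: weighted_eseries_eq0.
have RPq Q : RP Qs S P Q -> exists n, q n = Q.
  move=> [QsQ PSQ]; apply: contrapT => /forallNP qQ.
  suff PSQ0 : P (S Q) = 0 by rewrite PSQ0 ltxx in PSQ.
  by apply: Pnull (mS QsQ) _ => n _; exact: QS0.
have -> : \bigcup_(Q in RP Qs S P) S Q =
    \bigcup_(n in [set n | RP Qs S P (q n)]) S (q n).
  apply/seteqP; split=> [x [Q RPQ Sx]|x [n RPqn Sx]]; last by exists (q n).
  by have [n qnQ] := RPq Q RPQ; exists n; rewrite /= qnQ.
set U := \bigcup_(n in _) _.
have mU : measurable U by apply: bigcup_measurable => n _; exact: mS.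
split=> //; apply/probability_setC_eq0 => //.
pose W := \bigcap_(n in [set n | (0 < l n)%R]) ~` S (q n).
have mW : measurable W by apply: bigcap_measurableType => n _; apply: measurableC; exact: mS.
have PW : P W = 0.
  apply: Pnull => // n ln; apply: (subset_measure0 mW _ _ (QSC (Qsq n))).
    by apply: measurableC; exact: mS.
  by move=> x /(_ n ln).
apply/negligibleP; first exact: measurableC.
apply: (@negligibleS _ _ _ _ (W `|` \bigcup_n (S (q n) `\` U))).
  move=> x Ux; have [Wx|] := pselect (W x); first by left.
  by move=> /existsNP [n /not_implyP [ln Sx]]; right; exists n => //; split => //; apply: contrapT.
apply: negligibleU; first exact/negligibleP.
apply: negligible_bigcup => n; have [RPqn|nRPqn] := pselect (RP Qs S P (q n)).
  suff -> : S (q n) `\` U = set0 by exact: negligible_set0.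
  by apply/seteqP; split => x // [Sx]; apply; exists n.
apply: (@negligibleS _ _ _ _ (S (q n))); first exact: subDsetl.
apply/negligibleP; first exact: mS.
by apply/eqP; rewrite eq_le measure_ge0 andbT leNgt; apply/negP => PS; apply: nRPqn.
Qed.

End pre_Hahn_localizable_class_S.

Section class_S_pre_Hahn_localizable.
Context {d : measure_display} {T : measurableType d} {R : realType}.
Local Notation prob := (probability T R).
Local Open Scope ereal_scope.

Lemma abs_cont_conull (Q P : prob) B : measurable B -> Q (~` B) = 0 ->
  (forall A, measurable A -> P A = 0 -> Q (A `&` B) = 0) -> abs_cont Q P.
Proof.
move=> mB QBc PBQ A mA PA.
have mAB : measurable ((A `&` B) `|` ~` B).
  by apply: measurableU; [exact: measurableI|exact: measurableC].
apply: (subset_measure0 mA mAB).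
  by move=> x Ax; have [Bx|nBx] := pselect (B x); [left|right].
by apply: null_set_setU => //; [exact: measurableI|exact: measurableC|exact: PBQ].
Qed.

Definition dominated_on (Ps : set prob) (Q : prob) (B : set T) :=
  measurable B /\ exists2 P, Ps P &
    forall A, measurable A -> P A = 0 -> Q (A `&` B) = 0.

Lemma dominated_on_bigcup (Ps : set prob) Q (B_ : (set T)^nat) :
  sigma_convex Ps -> (forall n, dominated_on Ps Q (B_ n)) ->
  dominated_on Ps Q (\bigcup_n B_ n).
Proof.
move=> sc QB; have /choice [P_ PB_] : forall n, exists P, Ps P /\
    forall A, measurable A -> P A = 0 -> Q (A `&` B_ n) = 0.
  by move=> n; have [_ [P PsP PB]] := QB n; exists P.
have mB n : measurable (B_ n) by case: (QB n).
have [P PsP dom] := sigma_convex_dominates sc (fun n => (PB_ n).1).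
split; first exact: bigcup_measurable.
exists P => // A mA PA; rewrite setI_bigcupr; apply/negligibleP.
  by apply: bigcup_measurable => n _; exact: measurableI.
apply: negligible_bigcup => n; apply/negligibleP; first exact: measurableI.
exact: (PB_ n).2 _ mA (dom n A mA PA).
Qed.

(* For a maximal [B], every [P'] in [Ps] is null on [SQ `\` B]: removing the
   [P']-singular part of [Q] from it leaves a set on which [Q] is dominated by
   [P'], hence a [Q]-null subset of the support, hence a polar set. *)
Lemma supported_dominated (Ps : set prob) (Q : prob) (SQ : set T) :
  sigma_convex Ps -> supported_with Ps Q SQ ->
  (forall A, measurable A -> (forall P, Ps P -> P A = 0) -> Q A = 0) ->
  exists P, Ps P /\ abs_cont Q P.
Proof.
move=> sc [mSQ QSQc Qpolar] Qnull.
have [P0 PsP0] : exists P, Ps P.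
  apply: contrapT => noP; have := probability_setT Q.
  rewrite Qnull // => [/eqP|P PsP]; first by rewrite eq_sym onee_eq0.
  by case: noP; exists P.
have Q0 : dominated_on Ps Q set0.
  by split=> //; exists P0 => // A _ _; rewrite setI0 measure0.
have [B [mB [PB PsPB PBQ]] maxB] := measure_exhaustion Q
  (fun B QB => proj1 QB) (ex_intro _ _ Q0) (fun _ => dominated_on_bigcup sc).
have mSQB : measurable (SQ `\` B) by exact: measurableD.
have P_SQB P' : Ps P' -> P' (SQ `\` B) = 0.
  move=> PsP'; have [E [mE P'E] EQ] := exists_singular_null_set Q P'.
  pose D := (SQ `\` B) `\` E.
  have mD : measurable D by exact: measurableD.
  have QD : dominated_on Ps Q D.
    split=> //; exists P' => // A mA P'A.
    apply: (subset_measure0 _ _ _ (EQ A mA P'A)); [exact: measurableI|exact: measurableD|].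
    by move=> x [Ax [_ nEx]].
  have QDSQ : Q (D `&` SQ) = 0.
    rewrite -(maxB _ QD); congr (Q _); apply/seteqP.
    by split=> x [Dx _]; split=> //; case: Dx => -[].
  have [N [mN DN PN]] := Qpolar D mD QDSQ.
  have mDE : measurable (D `|` E) by exact: measurableU.
  apply: (subset_measure0 mSQB mDE).
    by move=> x SQBx; have [Ex|nEx] := pselect (E x); [right|left].
  apply: null_set_setU => //; apply: (subset_measure0 mD mN _ (PN P' PsP')).
  by move=> x Dx; apply: DN; split => //; case: Dx => -[].
have QBc : Q (~` B) = 0.
  have mU : measurable ((SQ `\` B) `|` ~` SQ) by apply: measurableU => //; exact: measurableC.
  apply: (subset_measure0 _ mU); first exact: measurableC.
    by move=> x nBx; have [SQx|nSQx] := pselect (SQ x); [left|right].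
  by apply: null_set_setU => //; [exact: measurableC|exact: Qnull].
by exists PB; split=> //; exact: abs_cont_conull mB QBc PBQ.
Qed.

Lemma disjointly_supported_sconv (Ps Rs : set prob) (S : prob -> set T) P :
  (forall Q, Rs Q -> supported_with Ps Q (S Q)) ->
  qs_disjointly_supported Ps Rs S -> Ps P ->
  measurable (\bigcup_(Q in RP Rs S P) S Q) ->
  P (\bigcup_(Q in RP Rs S P) S Q) = 1 ->
  exists mu, in_sconv Rs mu /\ abs_cont P mu.
Proof.
move=> supp disj PsP mU PU; set U := \bigcup_(Q in _) _ in mU PU.
have mS Q : Rs Q -> measurable (S Q) by case/supp.
have [q RPq] : exists q : nat -> prob, RP Rs S P = range q.
  apply: (@charged_family_countable _ _ _ P _ _ S).
  - apply/set0P/negP => /eqP RP0; move: PU.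
    by rewrite /U RP0 bigcup_set0 measure0 => /eqP; rewrite eq_sym onee_eq0.
  - by move=> Q [RsQ _]; exact: mS.
  - move=> Q Q' [RsQ _] [RsQ' _] neq.
    exact: polar_negligible (disj _ _ RsQ RsQ' neq) PsP.
  - by move=> Q [].
have Rsq n : Rs (q n) by have [] : RP Rs S P (q n) by rewrite RPq; exists n.
exists (mixture q); split; first exact: mixture_in_sconv.
move=> A mA /mixture_eq0 qA; apply/negligibleP => //.
apply: (@negligibleS _ _ _ _ (~` U `|` \bigcup_n (A `&` S (q n)))).
  move=> x Ax; have [[Q RPQ SQx]|] := pselect (U x); last by left.
  by right; move: RPQ; rewrite RPq => -[n _ qnQ]; exists n => //; rewrite qnQ.
apply: negligibleU; first by apply/negligibleP; [exact: measurableC|exact/probability_setC_eq0].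
apply: negligible_bigcup => n; have [mSq _ Sqpolar] := supp _ (Rsq n).
apply: polar_negligible PsP; apply: Sqpolar => //.
exact: (subset_measure0 (measurableI _ _ mA mSq) mA (@subIsetl _ _ _) (qA n)).
Qed.

Lemma disjointly_supported_delta (Ps Rs : set prob) (S : prob -> set T) :
  supported_alternative Ps Rs S -> qs_disjointly_supported Ps Rs S ->
  forall Q Q', Rs Q -> Rs Q' -> Q (S Q') = (if pselect (Q = Q') then 1 else 0).
Proof.
move=> [supp same] disj Q Q' RsQ RsQ'; have [mS QSc _] := supp _ RsQ.
case: pselect => [eqQ|neq] /=; first by rewrite -eqQ; exact/probability_setC_eq0.
have [mS' _ _] := supp _ RsQ'.
apply/negligibleP => //; apply: (@negligibleS _ _ _ _ ((S Q `&` S Q') `|` ~` S Q)).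
  by move=> x SQ'x; have [SQx|nSQx] := pselect (S Q x); [left|right].
apply: negligibleU; first exact: same_null_sets_negligible (disj _ _ RsQ RsQ' neq) RsQ.
by apply/negligibleP => //; exact: measurableC.
Qed.

End class_S_pre_Hahn_localizable.

Unset Implicit Arguments.

Theorem lemma3p10 (d : measure_display) (T : measurableType d) (R : realType)
  (Ps : set (probability T R)) :
  sigma_convex Ps ->
  ((class_S Ps /\
    exists (Rs : set (probability T R)) (S : probability T R -> set T),
      [/\ supported_alternative Ps Rs S, qs_disjointly_supported Ps Rs S &
          forall P, Ps P ->
            measurable (\bigcup_(Q in RP Rs S P) S Q) /\
            P (\bigcup_(Q in RP Rs S P) S Q) = 1%E])
   <-> pre_Hahn_localizable Ps).
Proof.
move=> sc; split=> [[_ [Rs [S [[supp same] disj cover]]]]|[Qs [S [mS QS QsPs PsQs]]]].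
  exists Rs, S; split.
  - by move=> Q /supp[].
  - exact: disjointly_supported_delta (conj supp same) disj.
  - move=> Q RsQ; apply: supported_dominated sc (supp _ RsQ) _ => A mA PA.
    exact: (same A mA).1 PA Q RsQ.
  - move=> P PsP; have [mU PU] := cover P PsP.
    exact: disjointly_supported_sconv supp disj PsP mU PU.
split; first by exists Qs, S; exact: pre_Hahn_supported_alternative.
exists Qs, S; split.
- exact: pre_Hahn_supported_alternative.
- exact: pre_Hahn_disjointly_supported.
- exact: pre_Hahn_cover.
Qed.
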